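(* Let $(P,\leq_1,\leq_2)$ be a finite weak plane poset. Then the relation $\ll$ on $P$ defined by $$x\ll y \iff (y\leq_1 x \text{ or } x\leq_2 y)$$ is a total order on $P$.
   Context: A double poset is a finite set $P$ equipped with two partial orders $\leq_1$ and $\leq_2$. A weak plane poset is a finite double poset $(P,\leq_1,\leq_2)$ such that: (1) for all $x,y\in P$, if $x\leq_1 y$ and $x\leq_2 y$ then $x=y$; (2) the relation $\preceq$ defined on $P$ by $x\preceq y \iff (x\leq_1 y \text{ or } x\leq_2 y)$ is a total quasi-order (i.e. reflexive, transitive, and any two elements are comparable; it need not be antisymmetric). *)

From mathcomp Require Import all_boot.
Set Implicit Arguments. Unset Strict Implicit. Unset Printing Implicit Defensive.

Definition partial_order (T : Type) (r : rel T) : Prop :=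
  reflexive r /\ antisymmetric r /\ transitive r.

Definition total_order (T : Type) (r : rel T) : Prop :=
  partial_order r /\ total r.

Definition total_quasi_order (T : Type) (r : rel T) : Prop :=
  reflexive r /\ transitive r /\ total r.

Definition double_poset (P : finType) (le1 le2 : rel P) : Prop :=
  partial_order le1 /\ partial_order le2.

Definition weak_plane_poset (P : finType) (le1 le2 : rel P) : Prop :=
  [/\ double_poset le1 le2,
      (forall x y : P, le1 x y -> le2 x y -> x = y)
    & total_quasi_order (fun x y => le1 x y || le2 x y)].

Definition ll (P : finType) (le1 le2 : rel P) : rel P :=
  fun x y => le1 y x || le2 x y.

From mathcomp Require Import all_boot.

(* Everything but transitivity of [ll] is immediate.  For transitivity with
   mixed steps [y <=_1 x] and [y <=_2 z], compare [x] and [z] in the total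
   quasi-order: in the bad cases [y] lies below [z] (or [x]) in both orders,
   hence equals it.  The other mixed case is this one for the pair
   [(le2^op, le1^op)], which defines the same relation [ll]. *)

Lemma ll_refl (T : finType) (le1 le2 : rel T) :
  reflexive le2 -> reflexive (ll le1 le2).
Proof. by move=> le2_refl x; rewrite /ll le2_refl orbT. Qed.

Lemma ll_anti (T : finType) (le1 le2 : rel T) :
  antisymmetric le1 -> antisymmetric le2 ->
  (forall x y, le1 x y -> le2 x y -> x = y) ->
  antisymmetric (ll le1 le2).
Proof.
move=> le1_anti le2_anti plane x y /andP[/orP[h1|h2] /orP[h1'|h2']].
- by apply: le1_anti; rewrite h1 h1'.
- by rewrite (plane _ _ h1 h2').
- by apply: plane.
- by apply: le2_anti; rewrite h2 h2'.
Qed.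

Lemma ll_op_swap (T : finType) (le1 le2 : rel T) :
  ll le1 le2 =2 ll (fun x y => le2 y x) (fun x y => le1 y x).
Proof. by move=> x y; rewrite /ll orbC. Qed.

Section PlaneQuasiOrder.

Variables (T : finType) (le1 le2 : rel T).
Hypothesis le1_trans : transitive le1.
Hypothesis le2_trans : transitive le2.
Hypothesis plane : forall x y, le1 x y -> le2 x y -> x = y.
Hypothesis le12_total : total (fun x y => le1 x y || le2 x y).

Lemma ll_total : total (ll le1 le2).
Proof.
move=> x y; rewrite /ll.
by case/orP: (le12_total x y) => /orP[->|->]; rewrite ?orbT.
Qed.

Lemma ll_mixed y x z : le1 y x -> le2 y z -> ll le1 le2 x z.
Proof.
move=> le1yx le2yz; rewrite /ll.
case/orP: (le12_total x z) => /orP[le_xz|le_zx]; rewrite ?le_zx ?le_xz ?orbT //.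
- have eq_yz : y = z by apply: plane => //; apply: le1_trans le1yx le_xz.
  by rewrite -eq_yz le1yx.
- have eq_yx : y = x by apply: plane => //; apply: le2_trans le2yz le_zx.
  by rewrite -eq_yx le2yz orbT.
Qed.

End PlaneQuasiOrder.

Lemma ll_trans (T : finType) (le1 le2 : rel T) :
  transitive le1 -> transitive le2 ->
  (forall x y, le1 x y -> le2 x y -> x = y) ->
  total (fun x y => le1 x y || le2 x y) ->
  transitive (ll le1 le2).
Proof.
move=> le1_trans le2_trans plane le12_total y x z.
case/orP=> [le1yx|le2xy] /orP[le1zy|le2yz].
- by rewrite /ll (le1_trans _ _ _ le1zy le1yx).
- exact: ll_mixed le1yx le2yz.
- rewrite ll_op_swap.
  apply: (@ll_mixed _ (fun a b => le2 b a) (fun a b => le1 b a) _ _ _ _ y)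
    le2xy le1zy.
  + exact: rev_trans.
  + exact: rev_trans.
  + by move=> a b le2ba le1ba; rewrite (plane _ _ le1ba le2ba).
  + by move=> a b; case/orP: (le12_total a b) => /orP[]->; rewrite ?orbT.
- by rewrite /ll (le2_trans _ _ _ le2xy le2yz) orbT.
Qed.

Theorem mainTheorem1 (P : finType) (le1 le2 : rel P) :
  weak_plane_poset le1 le2 -> total_order (ll le1 le2).
Proof.
case=> [[[_ [le1_anti le1_trans]] [le2_refl [le2_anti le2_trans]]] plane].
case=> [_ [_ le12_total]].
split; first split.
- exact: ll_refl.
- split; first exact: ll_anti.
  exact: ll_trans.
- exact: ll_total.
Qed.
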